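(* Let $\mathfrak S=(S,\xrightarrow{F},\le)$ be an $\infty$-effective complete WSTS and $s_0\in S$. If the procedure $\mathbf{Clover}_{\mathfrak S}$ terminates on input $s_0$, then it returns $Clover_{\mathfrak S}(s_0)$.
   Context: A complete WSTS is a functional transition system $(S,\xrightarrow{F},\le)$ ($F$ finite set of partial maps, $s\to f(s)$ for $s\in\operatorname{dom}f$) where $(S,\le)$ is a partial order which is well (well-founded, no infinite antichain), a dcpo (every directed subset $D$ has a lub $\bigvee D$), and continuous (for every $x$, $\{y\mid y\ll x\}$ is directed with lub $x$, where $y\ll x$ iff every directed $D$ with $x\le\bigvee D$ contains an element above $y$), and each $f\in F$ is partial continuous: $\operatorname{dom}f$ is Scott-open (upward-closed and any directed $D$ with $\bigvee D$ in it meets it) and $f(\bigvee D)=\bigvee f(D)$ for directed $D\subseteq\operatorname{dom}f$. $Post(A)$: one-step successors; $Post^*$: reflexive-transitive closure; $Cover_{\mathfrak S}(s)=\downarrow Post^*(\downarrow s)$; $\operatorname{Lub}(E)=\{\bigvee D\mid D\subseteq E\text{ directed}\}$; $Clover_{\mathfrak S}(s)=\operatorname{Max}\operatorname{Lub}(Cover_{\mathfrak S}(s))$ (maximal elements). $F^*$: finite compositions of maps in $F$. Lub-acceleration: $\operatorname{dom}g^\infty=\operatorname{dom}g$; $g^\infty(x)=\bigvee_n g^n(x)$ if $x<g(x)$, else $g(x)$. $\infty$-effective: states finitely coded, $\le$ decidable, each $f\in F$ computable with decidable domain, and $g^\infty$ computable for each $g\in F^*$. Procedure $\mathbf{Clover}_{\mathfrak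 S}(s_0)$: 1. $A\leftarrow\{s_0\}$; 2. while $Post(A)\not\le^\flat A$ do (a) choose fairly $(g,a)\in F^*\times A$ with $a\in\operatorname{dom}g$; (b) $A\leftarrow A\cup\{g^\infty(a)\}$; 3. return $\operatorname{Max}A$. Here $B\le^\flat C$ iff $\downarrow B\subseteq\downarrow C$. Fairness: on every infinite execution, every pair $(g,a)\in F^*\times A_m$ (with $A_m$ the value of $A$ after $m$ iterations, $a\in\operatorname{dom}g$) is picked at some later stage. *)

From Stdlib Require Import List.
Import ListNotations.

Section WSTS.

Variable S : Type.
Variable le : S -> S -> Prop.

Definition lt (x y : S) : Prop := le x y /\ x <> y.

Definition is_partial_order : Prop :=
  (forall x, le x x) /\
  (forall x y z, le x y -> le y z -> le x z) /\
  (forall x y, le x y -> le y x -> x = y).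

Definition is_well : Prop :=
  well_founded lt /\
  ~ (exists f : nat -> S, forall i j, i <> j -> ~ le (f i) (f j)).

Definition directed (D : S -> Prop) : Prop :=
  (exists d, D d) /\
  (forall x y, D x -> D y -> exists z, D z /\ le x z /\ le y z).

Definition is_lub (D : S -> Prop) (l : S) : Prop :=
  (forall d, D d -> le d l) /\ (forall u, (forall d, D d -> le d u) -> le l u).

Definition is_dcpo : Prop :=
  forall D, directed D -> exists l, is_lub D l.

Definition way_below (y x : S) : Prop :=
  forall D l, directed D -> is_lub D l -> le x l -> exists d, D d /\ le y d.

Definition is_continuous : Prop :=
  forall x, directed (fun y => way_below y x) /\ is_lub (fun y => way_below y x) x.

Definition dom (f : S -> option S) (x : S) : Prop := f x <> None.

Definition scott_open (U : S -> Prop) : Prop :=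
  (forall x y, U x -> le x y -> U y) /\
  (forall D l, directed D -> is_lub D l -> U l -> exists d, D d /\ U d).

Definition partial_continuous (f : S -> option S) : Prop :=
  scott_open (dom f) /\
  (forall D l, directed D -> (forall d, D d -> dom f d) -> is_lub D l ->
     exists y, f l = Some y /\
       is_lub (fun z => exists d, D d /\ f d = Some z) y).

Definition complete_WSTS (F : list (S -> option S)) : Prop :=
  is_partial_order /\ is_well /\ is_dcpo /\ is_continuous /\
  (forall f, In f F -> partial_continuous f).

Fixpoint compose (w : list (S -> option S)) (x : S) : option S :=
  match w with
  | [] => Some x
  | f :: w' => match f x with Some y => compose w' y | None => None end
  end.

Definition in_Fstar (F : list (S -> option S)) (w : list (S -> option S)) : Prop :=
  forall f, In f w -> In f F.

Fixpoint iter_opt (g : S -> option S) (n : nat) (x : S) : option S :=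
  match n with
  | O => Some x
  | Datatypes.S n' => match iter_opt g n' x with Some y => g y | None => None end
  end.

(* lub-acceleration, as a relation: accel g x y  <->  x in dom g and g^oo(x) = y *)
Definition accel (g : S -> option S) (x y : S) : Prop :=
  exists gx, g x = Some gx /\
    ((lt x gx /\ is_lub (fun z => exists n, iter_opt g n x = Some z) y) \/
     (~ lt x gx /\ y = gx)).

(* infinity-effectiveness: states finitely coded, <= decidable, each f in F
   computable with decidable domain (f is a Rocq function with option result),
   and g^oo computable for every g in F^* *)
Definition infty_effective (F : list (S -> option S)) : Type :=
  ((exists code : S -> nat, forall x y, code x = code y -> x = y) *
   (forall x y, {le x y} + {~ le x y}) *
   { ginf : list (S -> option S) -> S -> option S |
       forall w x, in_Fstar F w ->
         (ginf w x = None <-> compose w x = None) /\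
         (forall y, ginf w x = Some y -> accel (compose w) x y) })%type.

Definition step (F : list (S -> option S)) (x y : S) : Prop :=
  exists f, In f F /\ f x = Some y.

Inductive reach (F : list (S -> option S)) : S -> S -> Prop :=
| reach_refl : forall x, reach F x x
| reach_step : forall x y z, step F x y -> reach F y z -> reach F x z.

Definition Cover (F : list (S -> option S)) (s : S) (x : S) : Prop :=
  exists y t, le y s /\ reach F y t /\ le x t.

Definition Lub (E : S -> Prop) (l : S) : Prop :=
  exists D, (forall d, D d -> E d) /\ directed D /\ is_lub D l.

Definition Max (E : S -> Prop) (x : S) : Prop :=
  E x /\ forall y, E y -> le x y -> y = x.

Definition Clover (F : list (S -> option S)) (s : S) : S -> Prop :=
  Max (Lub (Cover F s)).

(* B <=^flat C  iff  down B subset down C, with B = Post(A) *)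
Definition Post_le_flat (F : list (S -> option S)) (A : list S) : Prop :=
  forall f a b, In f F -> In a A -> f a = Some b ->
    exists c, In c A /\ le b c.

(* one iteration of the while loop: pick (g, a) in F^* x A with a in dom g,
   add g^oo(a) to A *)
Definition loop_step (F : list (S -> option S)) (A A' : list S) : Prop :=
  exists w a y, in_Fstar F w /\ In a A /\ accel (compose w) a y /\ A' = y :: A.

(* a terminating execution of Clover(s0): A 0 = {s0}, m iterations,
   loop condition true before each iteration and false at stage m *)
Definition terminating_run (F : list (S -> option S)) (s0 : S)
    (A : nat -> list S) (m : nat) : Prop :=
  A 0 = [s0] /\
  (forall k, k < m -> ~ Post_le_flat F (A k) /\ loop_step F (A k) (A (Datatypes.S k))) /\
  Post_le_flat F (A m).

Definition returned (A : list S) : S -> Prop := Max (fun x => In x A).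

End WSTS.

(* Every state the loop adds lies in E := Lub(Cover(s0)): E contains s0, is
   closed under each f in F (f is monotone and preserves directed lubs), hence
   under compositions and their iterates, and, the order being continuous, E
   is closed under directed lubs, hence under lub-accelerations.  Conversely,
   once Post(A) <=^flat A holds, the down-closure of A is closed under Post and
   contains s0, so it contains Cover(s0); since A is finite, every directed
   subset of the down-closure of A is bounded by a single element of A, so
   E is contained in the down-closure of A too.  A set sandwiched as
   A <= E <= down(A) has the same maximal elements as E. *)

From Stdlib Require Import List Classical Arith.

Section Clover.
Variable S : Type.
Variable le : S -> S -> Prop.
Hypothesis Hpo : is_partial_order S le.

Lemma le_refl x : le x x.
Proof. destruct Hpo as [H _]; apply H. Qed.

Lemma le_trans x y z : le x y -> le y z -> le x z.
Proof. destruct Hpo as [_ [H _]]; apply H. Qed.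

Lemma le_anti x y : le x y -> le y x -> x = y.
Proof. destruct Hpo as [_ [_ H]]; apply H. Qed.

Lemma directed_singleton x : directed S le (fun d => d = x).
Proof.
  split; [exists x; reflexivity|].
  intros u v -> ->; exists x; auto using le_refl.
Qed.

Lemma is_lub_singleton x : is_lub S le (fun d => d = x) x.
Proof. split; [intros d ->; apply le_refl | intros u Hu; auto]. Qed.

Lemma directed_pair x y : le x y -> directed S le (fun z => z = x \/ z = y).
Proof.
  intros Hxy; split; [exists x; auto|].
  intros u v Hu Hv; exists y; split; [auto|].
  split; [destruct Hu as [-> | ->] | destruct Hv as [-> | ->]]; auto using le_refl.
Qed.

Lemma is_lub_pair x y : le x y -> is_lub S le (fun z => z = x \/ z = y) y.
Proof.
  intros Hxy; split; [intros d [-> | ->]; auto using le_refl | intros u Hu; auto].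
Qed.

Lemma way_below_le z x : way_below S le z x -> le z x.
Proof.
  intros H.
  destruct (H _ x (directed_singleton x) (is_lub_singleton x) (le_refl x))
    as [d [-> Hd]].
  exact Hd.
Qed.

Lemma way_below_le_trans z x y : way_below S le z x -> le x y -> way_below S le z y.
Proof. intros H Hxy D l HD Hl Hyl; apply (H D l HD Hl); eauto using le_trans. Qed.

Lemma directed_bounded_in_list (A : list S) (D : S -> Prop) :
  directed S le D -> (forall d, D d -> exists a, In a A /\ le d a) ->
  exists a, In a A /\ forall d, D d -> le d a.
Proof.
  revert D; induction A as [|a A IH]; intros D HD Hbelow.
  - destruct HD as [[d Dd] _]; destruct (Hbelow d Dd) as [? [[] _]].
  - destruct (classic (forall d, D d -> le d a)) as [Ha | Hna].
    + exists a; split; [left|]; auto.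
    + (* Some d0 in D is not below a; the elements of D above d0 then form a
         cofinal directed subset lying below the tail A. *)
      apply not_all_ex_not in Hna; destruct Hna as [d0 Hd0].
      apply imply_to_and in Hd0; destruct Hd0 as [Dd0 Nd0].
      destruct HD as [_ Hdir].
      destruct (IH (fun d => D d /\ le d0 d)) as [a' [Ha' Hb]].
      * split; [exists d0; auto using le_refl|].
        intros u v [Du Hu] [Dv Hv]; destruct (Hdir u v Du Dv) as [z [Dz [Huz Hvz]]].
        exists z; eauto using le_trans.
      * intros d [Dd Hd0d]; destruct (Hbelow d Dd) as [c [[<- | Hc] Hdc]].
        -- exfalso; eauto using le_trans.
        -- eauto.
      * exists a'; split; [right; exact Ha'|].
        intros d Dd; destruct (Hdir d d0 Dd Dd0) as [z [Dz [Hdz Hd0z]]].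
        eauto using le_trans.
Qed.

Lemma Lub_below_list (A : list S) (E : S -> Prop) :
  (forall x, E x -> exists c, In c A /\ le x c) ->
  forall x, Lub S le E x -> exists c, In c A /\ le x c.
Proof.
  intros HE x [D [HDE [HD [_ Hleast]]]].
  destruct (directed_bounded_in_list A D HD) as [c [Hc Hub]]; eauto.
Qed.

Lemma Max_list_iff_cofinal (A : list S) (E : S -> Prop) :
  (forall x, In x A -> E x) -> (forall x, E x -> exists c, In c A /\ le x c) ->
  forall x, Max S le (fun x => In x A) x <-> Max S le E x.
Proof.
  intros HAE HEA x; split.
  - intros [Hx Hmax]; split; [auto|].
    intros y Ey Hxy; destruct (HEA y Ey) as [c [Hc Hyc]].
    assert (c = x) as -> by eauto using le_trans.
    apply le_anti; auto.
  - intros [Ex Hmax]; destruct (HEA x Ex) as [c [Hc Hxc]].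
    assert (c = x) as -> by auto.
    split; auto.
Qed.

Definition monotone_partial (g : S -> option S) : Prop :=
  forall x y a, le x y -> g x = Some a -> exists b, g y = Some b /\ le a b.

Lemma partial_continuous_monotone f :
  partial_continuous S le f -> monotone_partial f.
Proof.
  intros [[Hup _] Hlub] x y a Hxy Hfx.
  destruct (Hlub _ y (directed_pair x y Hxy)) as [b [Hfy [Hub _]]].
  - intros d [-> | ->]; [|apply (Hup x)]; unfold dom; congruence.
  - exact (is_lub_pair x y Hxy).
  - exists b; split; auto; apply Hub; exists x; auto.
Qed.

Lemma compose_monotone (w : list (S -> option S)) :
  (forall f, In f w -> monotone_partial f) -> monotone_partial (compose S w).
Proof.
  induction w as [|f w IH]; intros Hw x y a Hxy Ha; simpl in *.
  - exists y; split; [reflexivity | congruence].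
  - destruct (f x) as [fx|] eqn:Efx; [|discriminate].
    destruct (Hw f (or_introl eq_refl) x y fx Hxy Efx) as [fy [-> Hfxy]].
    apply (IH (fun g Hg => Hw g (or_intror Hg)) fx); auto.
Qed.

Section Iterates.
Variable g : S -> option S.
Hypothesis Hg : monotone_partial g.
Variables x gx : S.
Hypothesis Hgx : g x = Some gx.
Hypothesis Hx : le x gx.

Lemma iter_opt_succ_ge n z :
  iter_opt S g n x = Some z ->
  exists z', iter_opt S g (Datatypes.S n) x = Some z' /\ le z z'.
Proof.
  revert z; induction n as [|n IH]; intros z Hz; simpl in *.
  - injection Hz as <-; exists gx; auto.
  - destruct (iter_opt S g n x) as [y|] eqn:Ey; [|discriminate].
    destruct (IH y eq_refl) as [z' [Hz' Hyz']].
    rewrite Hz in Hz'; injection Hz' as <-.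
    destruct (Hg y z z Hyz' Hz) as [b [Hb Hzb]].
    exists b; rewrite Hz; auto.
Qed.

Lemma iter_opt_add_ge k n z :
  iter_opt S g n x = Some z -> exists z', iter_opt S g (n + k) x = Some z' /\ le z z'.
Proof.
  induction k as [|k IH]; intros Hz.
  - rewrite Nat.add_0_r; exists z; auto using le_refl.
  - destruct (IH Hz) as [z' [Hz' Hzz']].
    destruct (iter_opt_succ_ge _ _ Hz') as [z'' [Hz'' Hz'z'']].
    rewrite Nat.add_succ_r; exists z''; eauto using le_trans.
Qed.

Lemma iterates_directed : directed S le (fun z => exists n, iter_opt S g n x = Some z).
Proof.
  split; [exists x, 0; reflexivity|].
  intros z1 z2 [n1 H1] [n2 H2].
  destruct (iter_opt_add_ge n2 n1 z1 H1) as [u1 [G1 K1]].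
  destruct (iter_opt_add_ge n1 n2 z2 H2) as [u2 [G2 K2]].
  rewrite Nat.add_comm, G1 in G2; injection G2 as <-.
  exists u1; split; [exists (n1 + n2)|]; auto.
Qed.

End Iterates.

Definition closed_under (g : S -> option S) (P : S -> Prop) : Prop :=
  forall a b, P a -> g a = Some b -> P b.

Definition closed_directed_lub (P : S -> Prop) : Prop :=
  forall D l, directed S le D -> (forall d, D d -> P d) -> is_lub S le D l -> P l.

Definition down_closed (P : S -> Prop) : Prop :=
  forall x y, le x y -> P y -> P x.

Lemma closed_under_compose P (w : list (S -> option S)) :
  (forall f, In f w -> closed_under f P) -> closed_under (compose S w) P.
Proof.
  induction w as [|f w IH]; intros Hw a b Pa Hab; simpl in *.
  - congruence.
  - destruct (f a) as [fa|] eqn:Efa; [|discriminate].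
    apply (IH (fun g Hg => Hw g (or_intror Hg)) fa); auto.
    exact (Hw f (or_introl eq_refl) a fa Pa Efa).
Qed.

Lemma closed_under_iter_opt P g n : closed_under g P -> closed_under (iter_opt S g n) P.
Proof.
  intros Hg a b Pa; revert b; induction n as [|n IH]; intros b Hb; simpl in *.
  - congruence.
  - destruct (iter_opt S g n a) as [y|] eqn:Ey; [|discriminate]; eauto.
Qed.

Lemma closed_under_accel P g a y :
  monotone_partial g -> closed_under g P -> closed_directed_lub P ->
  P a -> accel S le g a y -> P y.
Proof.
  intros Hmono Hg Hlub Pa [ga [Hga [[[Hle _] Hy] | [_ ->]]]].
  - apply (Hlub _ y (iterates_directed g Hmono a ga Hga Hle)); auto.
    intros d [n Hn]; exact (closed_under_iter_opt P g n Hg a d Pa Hn).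
  - eauto.
Qed.

Lemma Lub_incl (E : S -> Prop) x : E x -> Lub S le E x.
Proof.
  intros Ex; exists (fun d => d = x).
  split; [intros d ->; exact Ex | split; auto using directed_singleton, is_lub_singleton].
Qed.

Lemma Lub_closed_directed_lub (C : S -> Prop) :
  is_continuous S le -> down_closed C -> closed_directed_lub (Lub S le C).
Proof.
  intros Hcont Hdown E l [[e0 Ee0] Hdir] HE [Hub Hleast].
  (* The elements way below some e in E all lie in C and have lub l. *)
  exists (fun z => exists e, E e /\ way_below S le z e).
  split; [|split; [split|split]].
  - intros z [e [Ee Hze]].
    destruct (HE e Ee) as [D [HDC [HD Hl]]].
    destruct (Hze D e HD Hl (le_refl e)) as [d [Dd Hzd]]; eauto.
  - destruct (Hcont e0) as [[[z Hz] _] _]; exists z, e0; auto.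
  - intros z1 z2 [e1 [Ee1 W1]] [e2 [Ee2 W2]].
    destruct (Hdir e1 e2 Ee1 Ee2) as [e3 [Ee3 [H1 H2]]].
    destruct (Hcont e3) as [[_ Hdir3] _].
    destruct (Hdir3 z1 z2 (way_below_le_trans _ _ _ W1 H1) (way_below_le_trans _ _ _ W2 H2))
      as [z [Wz [Hz1 Hz2]]].
    exists z; split; [exists e3|]; auto.
  - intros z [e [Ee Hze]]; eauto using le_trans, way_below_le.
  - intros u Hu; apply Hleast; intros e Ee.
    destruct (Hcont e) as [_ [_ Hle]]; apply Hle.
    intros z Hze; apply Hu; exists e; auto.
Qed.

Lemma Lub_closed_under (C : S -> Prop) f :
  partial_continuous S le f -> closed_under f C -> closed_under f (Lub S le C).
Proof.
  intros Hf HC a b [E [HEC [[[e00 Ee00] Hdir] [Hub Hleast]]]] Hfa.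
  pose proof (partial_continuous_monotone f Hf) as Hmono.
  destruct Hf as [[Hup Hopen] Hlub].
  destruct (Hopen E a) as [e0 [Ee0 De0]];
    [split; [exists e00|]; auto | split; auto | unfold dom; congruence|].
  set (E' := fun e => E e /\ dom S f e).
  assert (HE' : directed S le E').
  { split; [exists e0; split; auto|].
    intros u v [Eu Du] [Ev _]; destruct (Hdir u v Eu Ev) as [z [Ez [Huz Hvz]]].
    exists z; split; [split; [|apply (Hup u)]|]; auto. }
  (* E' is cofinal in E, so it has the same lub a. *)
  assert (Ha' : is_lub S le E' a).
  { split; [intros d [Ed _]; auto|].
    intros u Hu; apply Hleast; intros e Ee.
    destruct (Hdir e e0 Ee Ee0) as [z [Ez [Hez He0z]]].
    apply le_trans with z; [exact Hez|]; apply Hu; split; eauto. }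
  destruct (Hlub E' a HE' (fun d Hd => proj2 Hd) Ha') as [y [Hfy Hy]].
  rewrite Hfy in Hfa; injection Hfa as <-.
  exists (fun z => exists d, E' d /\ f d = Some z).
  split; [|split; [split|exact Hy]].
  - intros z [d [[Ed _] Hfd]]; eauto.
  - unfold dom in De0; destruct (f e0) as [z|] eqn:Ez; [|congruence].
    exists z, e0; split; [split; [|unfold dom; congruence]|]; auto.
  - intros z1 z2 [d1 [[E1 _] F1]] [d2 [[E2 _] F2]].
    destruct (Hdir d1 d2 E1 E2) as [d3 [E3 [H1 H2]]].
    destruct (Hmono _ _ _ H1 F1) as [b1 [G1 K1]].
    destruct (Hmono _ _ _ H2 F2) as [b2 [G2 K2]].
    rewrite G1 in G2; injection G2 as <-.
    exists b1; split; [exists d3; split; [split; [|unfold dom; congruence]|]|]; auto.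
Qed.

Variable F : list (S -> option S).
Hypothesis Hpc : forall f, In f F -> partial_continuous S le f.

Lemma reach_step_r x y z : reach S F x y -> step S F y z -> reach S F x z.
Proof.
  induction 1 as [x|x y' y Hxy' _ IH]; intros Hyz.
  - eapply reach_step; [exact Hyz | apply reach_refl].
  - eapply reach_step; eauto.
Qed.

Lemma Cover_self s : Cover S le F s s.
Proof. exists s, s; split; [|split; [apply reach_refl|]]; apply le_refl. Qed.

Lemma Cover_down_closed s : down_closed (Cover S le F s).
Proof. intros x y Hxy [u [t [Hus [Hut Hyt]]]]; exists u, t; eauto using le_trans. Qed.

Lemma Cover_closed_under s f : In f F -> closed_under f (Cover S le F s).
Proof.
  intros Hf x b [u [t [Hus [Hut Hxt]]]] Hfx.
  destruct (partial_continuous_monotone f (Hpc f Hf) x t b Hxt Hfx)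
    as [b' [Hft Hbb']].
  exists u, b'; split; [|split]; auto.
  apply reach_step_r with t; [exact Hut | exists f; auto].
Qed.

Lemma Cover_below_post_fixed s (A : list S) :
  Post_le_flat S le F A -> In s A ->
  forall x, Cover S le F s x -> exists c, In c A /\ le x c.
Proof.
  intros Hpost Hs x [u [t [Hus [Hut Hxt]]]].
  (* The down-closure of A is closed under the steps of F. *)
  assert (Hreach : forall y z, reach S F y z -> forall a, In a A -> le y a ->
            exists c, In c A /\ le z c).
  { induction 1 as [y|y y' z [f [Hf Hfy]] _ IH]; intros a Ha Hya; eauto.
    destruct (partial_continuous_monotone f (Hpc f Hf) y a y' Hya Hfy)
      as [b [Hfa Hy'b]].
    destruct (Hpost f a b Hf Ha Hfa) as [c [Hc Hbc]].
    apply (IH c Hc); eauto using le_trans. }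
  destruct (Hreach u t Hut s Hs Hus) as [c [Hc Htc]].
  exists c; eauto using le_trans.
Qed.

Hypothesis Hcont : is_continuous S le.

Lemma Lub_Cover_closed_under_accel s w a y :
  in_Fstar S F w -> Lub S le (Cover S le F s) a -> accel S le (compose S w) a y ->
  Lub S le (Cover S le F s) y.
Proof.
  intros Hw; apply closed_under_accel.
  - apply compose_monotone; intros f Hf.
    apply partial_continuous_monotone; auto.
  - apply closed_under_compose; intros f Hf.
    apply Lub_closed_under; auto using Cover_closed_under.
  - apply Lub_closed_directed_lub; auto using Cover_down_closed.
Qed.

Lemma terminating_run_sound s0 (A : nat -> list S) m :
  terminating_run S le F s0 A m ->
  forall k, k <= m -> In s0 (A k) /\ forall x, In x (A k) -> Lub S le (Cover S le F s0) x.
Proof.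
  intros [HA0 [Hloop _]] k; induction k as [|k IH]; intros Hk.
  - rewrite HA0; split; [left; reflexivity|].
    intros x [<- | []]; apply Lub_incl, Cover_self.
  - destruct IH as [Hs0 HA]; [apply Nat.lt_le_incl, Hk|].
    destruct (Hloop k Hk) as [_ [w [a [y [Hw [Ha [Hacc ->]]]]]]].
    split; [right; exact Hs0|].
    intros x [<- | Hx]; eauto using Lub_Cover_closed_under_accel.
Qed.

End Clover.

Theorem theorem5p5 (S : Type) (le : S -> S -> Prop) (F : list (S -> option S))
  (HW : complete_WSTS S le F) (Heff : infty_effective S le F) (s0 : S)
  (A : nat -> list S) (m : nat) (Hrun : terminating_run S le F s0 A m) :
  forall x, returned S le (A m) x <-> Clover S le F s0 x.
Proof.
  destruct HW as [Hpo [_ [_ [Hcont Hpc]]]].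
  destruct (terminating_run_sound S le Hpo F Hpc Hcont s0 A m Hrun m (le_n m))
    as [Hs0 Hsound].
  destruct Hrun as [_ [_ Hpost]].
  apply Max_list_iff_cofinal; auto.
  apply Lub_below_list; auto.
  exact (Cover_below_post_fixed S le Hpo F Hpc s0 (A m) Hpost Hs0).
Qed.
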